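(* Let $U=\{(x_1,x_2,x_3,y_1,y_2,y_3)\in\mathbb{R}^6 : X\neq 0,\ Y\neq 0,\ Z\neq 0\}$. For every choice of polynomials $P_1,\dots,P_8\in\mathbb{Q}[x_1,x_2,x_3,y_1,y_2,y_3]$ and every variable $\xi\in\{x_1,x_2,x_3,y_1,y_2,y_3\}$ there exist polynomials $Q_1,\dots,Q_8\in\mathbb{Q}[x_1,x_2,x_3,y_1,y_2,y_3]$ with $Q_1=0$ such that $\frac{\partial}{\partial\xi}F_{Q_1,\dots,Q_8}=F_{P_1,\dots,P_8}$ on $U$. In particular, for any multi-indices $\lambda,\mu\in\mathbb{N}_0^3$, a six-fold antiderivative of $\frac{x_1^{\lambda_1}x_2^{\lambda_2}x_3^{\lambda_3}y_1^{\mu_1}y_2^{\mu_2}y_3^{\mu_3}}{R}$ with respect to $y_1,y_2,y_3,x_1,x_2,x_3$ can be chosen of the form $F_{Q_1,\dots,Q_8}$ with rational polynomials $Q_i$ (no stand-alone polynomial term is needed).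
   Context: For $(x_1,x_2,x_3,y_1,y_2,y_3)\in\mathbb{R}^6$ set $X=x_1-y_1$, $Y=x_2-y_2$, $Z=x_3-y_3$, $R=\sqrt{X^2+Y^2+Z^2}$. For polynomials $P_1,\dots,P_8$ define on $U$ $$F_{P_1,\dots,P_8}=P_1\frac1R+P_2R+P_3\operatorname{atanh}\!\Big(\frac XR\Big)+P_4\operatorname{atanh}\!\Big(\frac YR\Big)+P_5\operatorname{atanh}\!\Big(\frac ZR\Big)+P_6\arctan\!\Big(\frac XR\frac YZ\Big)+P_7\arctan\!\Big(\frac XR\frac ZY\Big)+P_8\arctan\!\Big(\frac YR\frac ZX\Big).$$ *)

From Stdlib Require Import Reals.
From Coquelicot Require Import Coquelicot.
From mathcomp Require Import all_boot all_algebra.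
From mathcomp Require Import Rstruct.
From mathcomp Require Import mpoly.

Set Implicit Arguments.
Unset Strict Implicit.
Unset Printing Implicit Defensive.

Definition ix1 : 'I_6 := @Ordinal 6 0 isT.
Definition ix2 : 'I_6 := @Ordinal 6 1 isT.
Definition ix3 : 'I_6 := @Ordinal 6 2 isT.
Definition iy1 : 'I_6 := @Ordinal 6 3 isT.
Definition iy2 : 'I_6 := @Ordinal 6 4 isT.
Definition iy3 : 'I_6 := @Ordinal 6 5 isT.

Definition pt := 'I_6 -> R.

Open Scope R_scope.

Definition Xc (v : pt) : R := v ix1 - v iy1.
Definition Yc (v : pt) : R := v ix2 - v iy2.
Definition Zc (v : pt) : R := v ix3 - v iy3.
Definition Rc (v : pt) : R := sqrt (Xc v ^ 2 + Yc v ^ 2 + Zc v ^ 2).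

Definition atanh (u : R) : R := / 2 * ln ((1 + u) / (1 - u)).

Definition inU (v : pt) : Prop := Xc v <> 0 /\ Yc v <> 0 /\ Zc v <> 0.

Definition qeval (P : {mpoly rat[6]}) (v : pt) : R :=
  mpoly.meval v (mpoly.map_mpoly (ratr : rat -> R) P).

(* F_{P_1,...,P_8}; the family P_1..P_8 is indexed by 'I_8 (P_k = P (k-1)). *)
Definition Ffun (P : 'I_8 -> {mpoly rat[6]}) (v : pt) : R :=
  let X := Xc v in let Y := Yc v in let Z := Zc v in let Rr := Rc v in
    qeval (P (@Ordinal 8 0 isT)) v * / Rr
  + qeval (P (@Ordinal 8 1 isT)) v * Rr
  + qeval (P (@Ordinal 8 2 isT)) v * atanh (X / Rr)
  + qeval (P (@Ordinal 8 3 isT)) v * atanh (Y / Rr)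
  + qeval (P (@Ordinal 8 4 isT)) v * atanh (Z / Rr)
  + qeval (P (@Ordinal 8 5 isT)) v * atan (X / Rr * (Y / Z))
  + qeval (P (@Ordinal 8 6 isT)) v * atan (X / Rr * (Z / Y))
  + qeval (P (@Ordinal 8 7 isT)) v * atan (Y / Rr * (Z / X)).

Definition upd (v : pt) (i : 'I_6) (t : R) : pt :=
  fun j => if j == i then t else v j.

Definition pderiv_on_U (xi : 'I_6) (G H : pt -> R) : Prop :=
  forall v : pt, inU v -> is_derive (fun t => G (upd v xi t)) (v xi) (H v).

Definition monomR (lam mu : 'I_3 -> nat) (v : pt) : R :=
  v ix1 ^ lam (@Ordinal 3 0 isT) * v ix2 ^ lam (@Ordinal 3 1 isT)
  * v ix3 ^ lam (@Ordinal 3 2 isT)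
  * v iy1 ^ mu (@Ordinal 3 0 isT) * v iy2 ^ mu (@Ordinal 3 1 isT)
  * v iy3 ^ mu (@Ordinal 3 2 isT) / Rc v.

(* F is a combination, with rational polynomial coefficients, of eight basis
   functions of the differences (X,Y,Z): 1/R, R, atanh(X/R), atanh(Y/R), atanh(Z/R)
   and three arctangents.

   1. Three variables (a,b,c) = (X,Y,Z), integrating in a. The a-derivatives of the
      basis functions are explicit rational functions of (a,b,c,R) ([is_derive_basis]).
      Integration by parts reduces a primitive of a^n * basis_k to one of
      a^(n+1) * (d/da basis_k); these are combinations of the three families a^m/R,
      bc a^m/(R(a^2+c^2)) and bc a^m/(R(a^2+b^2)), integrated by two-step recurrences
      on m. No 1/R term is ever produced ([prim3_basis]).
   2. Six variables. A coordinate xi moves one difference D = +-(xi - partner) and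
      fixes the two others; up to a permutation of (X,Y,Z) the basis of F is the
      three-variable basis at (D,E,G). Writing each coefficient of F_P as a polynomial
      in D with xi-independent coefficients ([Span_qeval]) and transporting the
      three-variable primitives by the chain rule gives F_Q with Q_1 = 0 ([Fprim_axis]).

   The first statement of the main theorem is [Fprim_axis] for the six coordinates;
   the second one iterates it six times, starting from x^lam y^mu / R = F_P. *)

From Stdlib Require Import Reals Lra Lia FunctionalExtensionality.
From Coquelicot Require Import Coquelicot.
From mathcomp Require Import all_boot all_algebra.
From mathcomp Require Import Rstruct.
From mathcomp Require Import mpoly.
Open Scope R_scope.

Lemma is_derive_eq (f : R -> R) a l l' : is_derive f a l -> l = l' -> is_derive f a l'.
Proof. by intros H <-. Qed.

(* Unfold Coquelicot's generic ring operations on [R] and state goals as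
   equalities in [R], so that [ring]/[field] apply. *)
Ltac rsimp := unfold plus, mult, Hierarchy.one, scal, opp, zero; simpl; unfold mult; simpl.
Ltac toR := match goal with |- @eq _ ?x ?y => change (@eq R x y) end; cbv beta.

Definition r3 (a b c : R) : R := sqrt (a ^ 2 + b ^ 2 + c ^ 2).

Lemma r3_sq a b c : r3 a b c ^ 2 = a ^ 2 + b ^ 2 + c ^ 2.
Proof. unfold r3. rewrite pow2_sqrt; [reflexivity | nra]. Qed.

Lemma sq_pos x : x <> 0 -> 0 < x ^ 2.
Proof. intros Hx. pose proof (Rsqr_pos_lt x Hx). unfold Rsqr in *. nra. Qed.

Lemma r3_pos a b c : b <> 0 -> 0 < r3 a b c.
Proof. intros Hb. unfold r3. apply sqrt_lt_R0. nra. Qed.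

Lemma div_r3_bound u a b c :
  u ^ 2 < a ^ 2 + b ^ 2 + c ^ 2 -> -1 < u / r3 a b c < 1.
Proof.
  intros Hu. pose proof (r3_sq a b c) as Hs.
  assert (Hr : 0 < r3 a b c) by (apply sqrt_lt_R0; nra).
  set (r := r3 a b c) in *.
  assert (E : u / r * r = u) by (field; lra).
  assert (Hlt : - r < u < r) by (split; nra).
  split; apply (Rmult_lt_reg_r r); lra.
Qed.

Lemma is_derive_atanh_comp f a df : is_derive f a df -> -1 < f a < 1 ->
  is_derive (fun x => atanh (f x)) a (df / (1 - f a ^ 2)).
Proof.
  intros Hd [H1 H2].
  assert (Hat : is_derive atanh (f a) (/ (1 - f a ^ 2))).
  { unfold atanh. auto_derive.
    - split; [lra | split; [|auto]].
      apply Rmult_lt_0_compat; [lra | apply Rinv_0_lt_compat; lra].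
    - field. split; [|split]; try lra. intro H. nra. }
  pose proof (is_derive_comp atanh f a _ _ Hat Hd) as H.
  unfold scal in H; simpl in H; unfold mult in H; simpl in H.
  apply (is_derive_eq _ _ _ _ H). unfold Rdiv. simpl. ring.
Qed.

Lemma is_derive_atan_comp f a df : is_derive f a df ->
  is_derive (fun x => atan (f x)) a (df / (1 + f a ^ 2)).
Proof.
  intros Hd. pose proof (is_derive_comp atan f a _ _ (is_derive_atan _) Hd) as H.
  unfold scal in H; simpl in H; unfold mult in H; simpl in H.
  apply (is_derive_eq _ _ _ _ H). toR. unfold Rsqr, Rdiv. simpl. field. nra.
Qed.

(* Derivatives with respect to the first argument a, for b <> 0 (so that R > 0). *)
Lemma is_derive_r3 a b c : b <> 0 -> is_derive (fun x => r3 x b c) a (a / r3 a b c).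
Proof.
  intros Hb. pose proof (r3_pos a b c Hb) as Hp. unfold r3 in *. auto_derive.
  - nra.
  - toR. replace (a * (a * 1) + b * (b * 1) + c * (c * 1)) with (a ^ 2 + b ^ 2 + c ^ 2)
      by ring.
    field. lra.
Qed.

Lemma is_derive_div_r3 a b c : b <> 0 ->
  is_derive (fun x => x / r3 x b c) a ((b ^ 2 + c ^ 2) / r3 a b c ^ 3).
Proof.
  intros Hb. pose proof (r3_pos a b c Hb) as Hp. pose proof (r3_sq a b c) as Hs.
  eapply is_derive_eq.
  { apply (is_derive_mult (fun x => x) (fun x => / r3 x b c)).
    - apply is_derive_id.
    - apply (is_derive_inv (fun x => r3 x b c)); [apply is_derive_r3 | lra]; auto.
    - intros; apply Rmult_comm. }
  rsimp. simpl in Hs. set (r := r3 a b c) in *.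
  replace (b * (b * 1) + c * (c * 1)) with (r * (r * 1) - a * (a * 1)) by lra.
  field. lra.
Qed.

Lemma is_derive_const_div_r3 k a b c : b <> 0 ->
  is_derive (fun x => k / r3 x b c) a (- (a * k) / r3 a b c ^ 3).
Proof.
  intros Hb. pose proof (r3_pos a b c Hb) as Hp.
  eapply is_derive_eq.
  { apply (is_derive_scal (fun x => / r3 x b c)).
    apply (is_derive_inv (fun x => r3 x b c)); [apply is_derive_r3 | lra]; auto. }
  toR. field. lra.
Qed.

(* The derivatives of basis 1..7 are
   rational functions of (a,b,c,R); basis 0 = 1/R is never integrated directly. *)
Definition basis (m : nat) (a b c : R) : R :=
  let r := r3 a b c in
  match m with
  | 0 => / r
  | 1 => r
  | 2 => atanh (a / r)
  | 3 => atanh (b / r)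
  | 4 => atanh (c / r)
  | 5 => atan (a / r * (b / c))
  | 6 => atan (a / r * (c / b))
  | 7 => atan (b / r * (c / a))
  | _ => 0
  end.

Definition dbasis (m : nat) (a b c : R) : R :=
  let r := r3 a b c in
  match m with
  | 1 => a / r
  | 2 => / r
  | 3 => - (a * b) / (r * (a ^ 2 + c ^ 2))
  | 4 => - (a * c) / (r * (a ^ 2 + b ^ 2))
  | 5 => b * c / (r * (a ^ 2 + c ^ 2))
  | 6 => b * c / (r * (a ^ 2 + b ^ 2))
  | 7 => - (b * c) / (r * (a ^ 2 + c ^ 2)) - b * c / (r * (a ^ 2 + b ^ 2))
  | _ => 0
  end.

Lemma is_derive_atanh_const_div_r3 k a b c : b <> 0 -> k ^ 2 < a ^ 2 + b ^ 2 + c ^ 2 ->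
  is_derive (fun x => atanh (k / r3 x b c)) a
    (- (a * k) / (r3 a b c * (r3 a b c ^ 2 - k ^ 2))).
Proof.
  intros Hb Hk. pose proof (r3_pos a b c Hb). pose proof (r3_sq a b c).
  eapply is_derive_eq.
  { apply is_derive_atanh_comp;
      [apply is_derive_const_div_r3 | apply div_r3_bound]; auto. }
  toR. field. split; [lra | nra].
Qed.

Lemma is_derive_atan_div_r3 q a b c : b <> 0 ->
  is_derive (fun x => atan (x / r3 x b c * q)) a
    (q * (b ^ 2 + c ^ 2) / (r3 a b c * (r3 a b c ^ 2 + a ^ 2 * q ^ 2))).
Proof.
  intros Hb. pose proof (r3_pos a b c Hb).
  eapply is_derive_eq.
  { apply is_derive_atan_comp.
    eapply is_derive_ext; [intros t; toR; apply Rmult_comm|].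
    apply is_derive_scal, is_derive_div_r3; auto. }
  toR. field. split; [nra | lra].
Qed.

Lemma is_derive_atan_bc_div_ra a b c : a <> 0 -> b <> 0 -> c <> 0 ->
  is_derive (fun x => atan (b / r3 x b c * (c / x))) a
    (- (b * c) / (r3 a b c * (a ^ 2 + c ^ 2)) - b * c / (r3 a b c * (a ^ 2 + b ^ 2))).
Proof.
  intros Ha Hb Hc. pose proof (r3_pos a b c Hb) as Hp. pose proof (r3_sq a b c) as Hs.
  pose proof (sq_pos a Ha). pose proof (sq_pos b Hb). pose proof (sq_pos c Hc).
  eapply is_derive_eq.
  { apply is_derive_atan_comp.
    apply (is_derive_mult (fun x => b / r3 x b c) (fun x => c / x)).
    - apply is_derive_const_div_r3; auto.
    - apply (is_derive_scal (fun x => / x)), (is_derive_inv (fun x => x)); auto.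
      apply is_derive_id.
    - intros; apply Rmult_comm. }
  rsimp. toR. simpl in Hs. set (r := r3 a b c) in *.
  assert (Hr2 : r * r = a * a + b * b + c * c) by lra.
  assert (Hab : a * a + b * b <> 0) by nra.
  assert (Hac : a * a + c * c <> 0) by nra.
  assert (E1 : 1 + b / r * (c / a) * (b / r * (c / a) * 1)
               = (a * a + b * b) * (a * a + c * c) / (r * r * (a * a))).
  { replace ((a * a + b * b) * (a * a + c * c)) with (r * r * (a * a) + b * b * (c * c))
      by (rewrite Hr2; ring).
    field. split; lra. }
  assert (E2 : - (b * c) / (r * (a * (a * 1) + c * (c * 1)))
               - b * c / (r * (a * (a * 1) + b * (b * 1)))
               = - (b * c) * (a * a + r * r) / (r * (a * a + b * b) * (a * a + c * c))).
  { rewrite Hr2. field. repeat split; lra. }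
  rewrite E1 E2. field. repeat split; lra.
Qed.

Lemma is_derive_basis m a b c : m <> 0%nat -> a <> 0 -> b <> 0 -> c <> 0 ->
  is_derive (fun x => basis m x b c) a (dbasis m a b c).
Proof.
  intros Hm Ha Hb Hc. pose proof (r3_pos a b c Hb) as Hp. pose proof (r3_sq a b c) as Hs.
  pose proof (sq_pos a Ha). pose proof (sq_pos b Hb). pose proof (sq_pos c Hc).
  unfold basis, dbasis; cbv zeta.
  destruct m as [|[|[|[|[|[|[|[|m]]]]]]]]; [congruence | | | | | | | |].
  - apply is_derive_r3; auto.
  - eapply is_derive_eq.
    { apply is_derive_atanh_comp; [apply is_derive_div_r3 | apply div_r3_bound]; auto; nra. }
    toR. set (r := r3 a b c) in *. replace (b ^ 2 + c ^ 2) with (r ^ 2 - a ^ 2) by lra.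
    field. split; [lra | nra].
  - eapply is_derive_eq; [apply is_derive_atanh_const_div_r3; auto; nra|].
    toR. replace (r3 a b c ^ 2 - b ^ 2) with (a ^ 2 + c ^ 2) by lra. reflexivity.
  - eapply is_derive_eq; [apply is_derive_atanh_const_div_r3; auto; nra|].
    toR. replace (r3 a b c ^ 2 - c ^ 2) with (a ^ 2 + b ^ 2) by lra. reflexivity.
  - eapply is_derive_eq; [apply is_derive_atan_div_r3; auto|].
    toR. rewrite Hs. field. repeat split; auto; try lra; intro; nra.
  - eapply is_derive_eq; [apply is_derive_atan_div_r3; auto|].
    toR. rewrite Hs. field. repeat split; auto; try lra; intro; nra.
  - apply is_derive_atan_bc_div_ra; auto.
  - auto_derive; reflexivity.
Qed.

Inductive Pol3 : (R -> R -> R -> R) -> Prop :=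
| P3k (q : rat) : Pol3 (fun _ _ _ => ratr q)
| P3a : Pol3 (fun a _ _ => a)
| P3b : Pol3 (fun _ b _ => b)
| P3c : Pol3 (fun _ _ c => c)
| P3add f g : Pol3 f -> Pol3 g -> Pol3 (fun a b c => f a b c + g a b c)
| P3mul f g : Pol3 f -> Pol3 g -> Pol3 (fun a b c => f a b c * g a b c)
| P3opp f : Pol3 f -> Pol3 (fun a b c => - f a b c).

Lemma Pol3_ext f g : Pol3 f -> (forall a b c, f a b c = g a b c) -> Pol3 g.
Proof.
  intros H E. replace g with f; [exact H|].
  do 3 (apply functional_extensionality; intro). auto.
Qed.

Lemma Pol3_nat n : Pol3 (fun _ _ _ => INR n).
Proof.
  eapply Pol3_ext; [apply (P3k n%:R)|]. intros. by rewrite GRing.rmorph_nat INRE.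
Qed.

Lemma Pol3_inv_nat n : Pol3 (fun _ _ _ => / INR (S n)).
Proof.
  eapply Pol3_ext; [apply (P3k (n.+1%:R)^-1)|].
  intros. by rewrite GRing.fmorphV GRing.rmorph_nat INRE.
Qed.

Lemma Pol3_pow_a p : Pol3 (fun a _ _ => a ^ p).
Proof.
  induction p as [|p IH]; [exact (Pol3_nat 1)|].
  eapply Pol3_ext; [apply (P3mul _ _ P3a IH) | reflexivity].
Qed.

Ltac pol3 := repeat (first [apply P3add | apply P3mul | apply P3opp | apply P3a | apply P3b
   | apply P3c | apply Pol3_inv_nat | apply Pol3_nat]).

Definition sum8 (f : nat -> R) : R :=
  f 0%nat + f 1%nat + f 2%nat + f 3%nat + f 4%nat + f 5%nat + f 6%nat + f 7%nat.

Definition Phi (h : nat -> R -> R -> R -> R) (a b c : R) : R :=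
  sum8 (fun m => h m a b c * basis m a b c).

Lemma Phi_single m (g : R -> R -> R -> R) a b c : m <> 0%nat ->
  Phi (fun j x y z => if Nat.eqb j m then g x y z else 0) a b c = g a b c * basis m a b c.
Proof.
  intros Hm. unfold Phi, sum8.
  destruct m as [|[|[|[|[|[|[|[|m]]]]]]]]; [congruence | ..]; cbn [Nat.eqb]; try ring.
  unfold basis; cbv zeta. ring.
Qed.

(* [prim3 f]: f has, in the variable a, a primitive [Phi h] with polynomial
   coefficients and no 1/R term (h_0 = 0), valid wherever abc <> 0. *)
Definition prim3 (f : R -> R -> R -> R) : Prop :=
  exists h : nat -> R -> R -> R -> R,
    (forall m, Pol3 (h m)) /\ (forall a b c, h 0%nat a b c = 0) /\
    (forall a b c, a <> 0 -> b <> 0 -> c <> 0 ->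
       is_derive (fun x => Phi h x b c) a (f a b c)).

Lemma prim3_ext f g : prim3 f ->
  (forall a b c, a <> 0 -> b <> 0 -> c <> 0 -> f a b c = g a b c) -> prim3 g.
Proof.
  intros [h [H1 [H2 H3]]] E. exists h; split; [|split]; auto.
  intros a b c Ha Hb Hc. eapply is_derive_eq; [apply H3 | apply E]; auto.
Qed.

Lemma prim3_zero : prim3 (fun _ _ _ => 0).
Proof.
  exists (fun _ _ _ _ => 0). split; [|split]; [intros; exact (Pol3_nat 0) | reflexivity|].
  intros a b c _ _ _. apply (is_derive_ext (fun _ => 0)); [|auto_derive; reflexivity].
  intros t. unfold Phi, sum8. toR. ring.
Qed.

Lemma prim3_add f g : prim3 f -> prim3 g -> prim3 (fun a b c => f a b c + g a b c).
Proof.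
  intros [h [H1 [H2 H3]]] [k [K1 [K2 K3]]].
  exists (fun m a b c => h m a b c + k m a b c). split; [|split].
  - intros m. apply P3add; auto.
  - intros. rewrite H2 K2. ring.
  - intros a b c Ha Hb Hc.
    eapply is_derive_ext;
      [|apply (is_derive_plus (fun x => Phi h x b c) (fun x => Phi k x b c)); auto].
    intros t. rsimp. toR. unfold Phi, sum8. ring.
Qed.

Lemma prim3_scal g f : Pol3 g -> (forall a a' b c, g a b c = g a' b c) -> prim3 f ->
  prim3 (fun a b c => g a b c * f a b c).
Proof.
  intros Pg Cg [h [H1 [H2 H3]]].
  exists (fun m a b c => g a b c * h m a b c). split; [|split].
  - intros m. apply P3mul; auto.
  - intros. rewrite H2. ring.
  - intros a b c Ha Hb Hc.
    eapply is_derive_ext;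
      [|apply (is_derive_scal (fun x => Phi h x b c) a (g a b c)); auto].
    intros t. rsimp. toR. unfold Phi, sum8. rewrite (Cg t a b c). ring.
Qed.

Lemma prim3_parts m p : m <> 0%nat ->
  prim3 (fun a b c => INR p * a ^ Nat.pred p * basis m a b c + a ^ p * dbasis m a b c).
Proof.
  intros Hm.
  exists (fun j x _ _ => if Nat.eqb j m then x ^ p else 0). split; [|split].
  - intros j. destruct (Nat.eqb j m); [apply Pol3_pow_a | apply (Pol3_nat 0)].
  - intros. destruct m; [congruence | reflexivity].
  - intros a b c Ha Hb Hc.
    eapply is_derive_ext; [intros t; symmetry; apply (Phi_single m (fun x _ _ => x ^ p)); auto|].
    eapply is_derive_eq.
    { apply (is_derive_mult (fun x => x ^ p) (fun x => basis m x b c)).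
      - apply (is_derive_pow (fun x => x)), is_derive_id.
      - apply is_derive_basis; auto.
      - intros; apply Rmult_comm. }
    rsimp. toR. ring.
Qed.

Lemma nat_ind2 (P : nat -> Prop) :
  P 0%nat -> P 1%nat -> (forall m, P m -> P (S (S m))) -> forall m, P m.
Proof.
  intros H0 H1 HS m. enough (P m /\ P (S m)) by tauto.
  induction m as [|m [IH1 IH2]]; auto.
Qed.

Ltac scale_by g := apply (prim3_scal g); [pol3 | intros; reflexivity |].

Ltac intro_r3 :=
  let a := fresh "a" in let b := fresh "b" in let c := fresh "c" in
  intros a b c Ha Hb Hc; pose proof (r3_sq a b c) as Hs; pose proof (r3_pos a b c Hb) as Hp;
  pose proof (sq_pos a Ha); pose proof (sq_pos b Hb); pose proof (sq_pos c Hc);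
  cbn [basis dbasis pow Nat.pred]; set (r := r3 a b c) in *.

(* a^m/R has a primitive: d/da (a^(m+1) R) = (m+2) a^(m+2)/R + (m+1)(b^2+c^2) a^m/R
   lowers m by two, and the cases m = 0, 1 are d/da atanh(a/R) and d/da R. *)
Lemma prim3_A m : prim3 (fun a b c => a ^ m / r3 a b c).
Proof.
  induction m as [| |m IH] using nat_ind2.
  - eapply prim3_ext; [apply (prim3_parts 2 0); auto|]. intro_r3. simpl. field. lra.
  - eapply prim3_ext; [apply (prim3_parts 1 0); auto|]. intro_r3. simpl. field. lra.
  - eapply prim3_ext.
    { scale_by (fun (_ _ _ : R) => / INR (S (S m))).
      apply prim3_add; [apply (prim3_parts 1 (S m)); auto|].
      scale_by (fun (_ b c : R) => - INR (S m) * (b * b + c * c)). exact IH. }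
    intro_r3. replace (b * b + c * c) with (r ^ 2 - a ^ 2) by (simpl in *; lra).
    rewrite (S_INR (S m)). field. split; [lra|]. pose proof (pos_INR (S m)). lra.
Qed.

(* b c a^m/(R (a^2+c^2)) has a primitive: the cases m = 0, 1 are the derivatives
   of basis 5 and -c * basis 3, and a^2 = (a^2+c^2) - c^2 lowers m by two. *)
Lemma prim3_Wc m : prim3 (fun a b c => b * c * a ^ m / (r3 a b c * (a ^ 2 + c ^ 2))).
Proof.
  induction m as [| |m IH] using nat_ind2.
  - eapply prim3_ext; [apply (prim3_parts 5 0); auto|]. intro_r3. simpl. field. nra.
  - eapply prim3_ext; [scale_by (fun (_ _ c : R) => - c); apply (prim3_parts 3 0); auto|].
    intro_r3. simpl. field. nra.
  - eapply prim3_ext.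
    { apply prim3_add; [scale_by (fun (_ b c : R) => b * c); apply (prim3_A m)|].
      scale_by (fun (_ _ c : R) => - (c * c)). exact IH. }
    intro_r3. field. nra.
Qed.

Lemma prim3_Wb m : prim3 (fun a b c => b * c * a ^ m / (r3 a b c * (a ^ 2 + b ^ 2))).
Proof.
  induction m as [| |m IH] using nat_ind2.
  - eapply prim3_ext; [apply (prim3_parts 6 0); auto|]. intro_r3. simpl. field. nra.
  - eapply prim3_ext; [scale_by (fun (_ b _ : R) => - b); apply (prim3_parts 4 0); auto|].
    intro_r3. simpl. field. nra.
  - eapply prim3_ext.
    { apply prim3_add; [scale_by (fun (_ b c : R) => b * c); apply (prim3_A m)|].
      scale_by (fun (_ b _ : R) => - (b * b)). exact IH. }
    intro_r3. field. nra.
Qed.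

Lemma prim3_by_parts n k : k <> 0%nat ->
  prim3 (fun a b c => a ^ S n * dbasis k a b c) -> prim3 (fun a b c => a ^ n * basis k a b c).
Proof.
  intros Hk Hd. eapply prim3_ext.
  { scale_by (fun (_ _ _ : R) => / INR (S n)).
    apply prim3_add; [apply (prim3_parts k (S n)); auto|].
    scale_by (fun (_ _ _ : R) => - INR 1). exact Hd. }
  intros a b c _ _ _. cbn [Nat.pred]. change (INR 1) with 1.
  field. apply not_0_INR. discriminate.
Qed.

Lemma prim3_dbasis n k : k <> 0%nat -> k <> 1%nat ->
  prim3 (fun a b c => a ^ S n * dbasis k a b c).
Proof.
  intros Hk0 Hk1.
  destruct k as [|[|[|[|[|[|[|[|k]]]]]]]]; try congruence.
  - eapply prim3_ext; [apply (prim3_A (S n))|]. intro_r3. field. lra.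
  - eapply prim3_ext.
    { apply prim3_add; [scale_by (fun (_ b _ : R) => - b); apply (prim3_A n)|].
      scale_by (fun (_ _ c : R) => c). apply (prim3_Wc n). }
    intro_r3. field. nra.
  - eapply prim3_ext.
    { apply prim3_add; [scale_by (fun (_ _ c : R) => - c); apply (prim3_A n)|].
      scale_by (fun (_ b _ : R) => b). apply (prim3_Wb n). }
    intro_r3. field. nra.
  - eapply prim3_ext; [apply (prim3_Wc (S n))|]. intro_r3. field. nra.
  - eapply prim3_ext; [apply (prim3_Wb (S n))|]. intro_r3. field. nra.
  - eapply prim3_ext.
    { apply prim3_add; scale_by (fun (_ _ _ : R) => - INR 1);
        [apply (prim3_Wc (S n)) | apply (prim3_Wb (S n))]. }
    intro_r3. change (INR 1) with 1. field. nra.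
  - eapply prim3_ext; [apply prim3_zero|]. intros. cbn [dbasis]. ring.
Qed.

Lemma prim3_basis n k : prim3 (fun a b c => a ^ n * basis k a b c).
Proof.
  destruct (Nat.eq_dec k 0) as [->|Hk0]; [|destruct (Nat.eq_dec k 1) as [->|Hk1]].
  - eapply prim3_ext; [apply (prim3_A n)|]. intros. reflexivity.
  - eapply prim3_ext.
    { apply prim3_add; [apply (prim3_A (S (S n)))|].
      scale_by (fun (_ b c : R) => b * b + c * c). apply (prim3_A n). }
    intro_r3. replace (b * b + c * c) with (r ^ 2 - a ^ 2) by (simpl in *; lra). field. lra.
  - apply prim3_by_parts, prim3_dbasis; auto.
Qed.

Lemma qevalD p q v : qeval (p + q)%R v = qeval p v + qeval q v.
Proof. rewrite /qeval GRing.raddfD mevalD. reflexivity. Qed.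
Lemma qevalN p v : qeval (- p)%R v = - qeval p v.
Proof. rewrite /qeval GRing.raddfN mevalN. reflexivity. Qed.
Lemma qevalM p q v : qeval (p * q)%R v = qeval p v * qeval q v.
Proof. rewrite /qeval GRing.rmorphM mevalM. reflexivity. Qed.
Lemma qevalC c v : qeval (c%:MP)%R v = ratr c.
Proof. rewrite /qeval map_mpolyC mevalC. reflexivity. Qed.
Lemma qevalX i v : qeval ('X_i)%R v = v i.
Proof. rewrite /qeval map_mpolyX mevalXU. reflexivity. Qed.
Lemma qeval0 v : qeval 0%R v = 0.
Proof. rewrite /qeval GRing.raddf0 meval0. reflexivity. Qed.
Lemma qevalXn p n v : qeval (p ^+ n)%R v = qeval p v ^ n.
Proof.
  induction n as [|n IH].
  - rewrite GRing.expr0 /qeval GRing.rmorph1 meval1. reflexivity.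
  - rewrite GRing.exprS qevalM IH. reflexivity.
Qed.

Definition polyfn (f : pt -> R) : Prop :=
  exists p : {mpoly rat[6]}, forall v, f v = qeval p v.

Lemma polyfn_const q : polyfn (fun _ => ratr q).
Proof. exists (q%:MP)%R. intros v. by rewrite qevalC. Qed.
Lemma polyfn_var i : polyfn (fun v => v i).
Proof. exists ('X_i)%R. intros v. by rewrite qevalX. Qed.
Lemma polyfn_add f g : polyfn f -> polyfn g -> polyfn (fun v => f v + g v).
Proof. intros [p Hp] [q Hq]. exists (p + q)%R. intros v. by rewrite qevalD Hp Hq. Qed.
Lemma polyfn_mul f g : polyfn f -> polyfn g -> polyfn (fun v => f v * g v).
Proof. intros [p Hp] [q Hq]. exists (p * q)%R. intros v. by rewrite qevalM Hp Hq. Qed.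
Lemma polyfn_opp f : polyfn f -> polyfn (fun v => - f v).
Proof. intros [p Hp]. exists (- p)%R. intros v. by rewrite qevalN Hp. Qed.

Lemma polyfn_pol3 h D E G : Pol3 h -> polyfn D -> polyfn E -> polyfn G ->
  polyfn (fun v => h (D v) (E v) (G v)).
Proof.
  intros Hh HD HE HG. induction Hh.
  - apply polyfn_const.
  - exact HD.
  - exact HE.
  - exact HG.
  - apply polyfn_add; auto.
  - apply polyfn_mul; auto.
  - apply polyfn_opp; auto.
Qed.

Definition coef (xi : 'I_6) (c : pt -> R) : Prop :=
  polyfn c /\ (forall v t, c (upd v xi t) = c v).

Lemma coef_const xi q : coef xi (fun _ => ratr q).
Proof. split; [apply polyfn_const | reflexivity]. Qed.

Lemma coef_var xi i : i != xi -> coef xi (fun v => v i).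
Proof.
  intros H. split; [apply polyfn_var|]. intros v t. unfold upd. by rewrite (negbTE H).
Qed.

Lemma coef_mul xi c d : coef xi c -> coef xi d -> coef xi (fun v => c v * d v).
Proof. intros [P1 C1] [P2 C2]. split; [apply polyfn_mul; auto | intros; rewrite C1 C2; auto]. Qed.

Inductive Span (xi : 'I_6) (D : pt -> R) : (pt -> R) -> Prop :=
| Sp0 : Span xi D (fun _ => 0)
| SpC c j f : coef xi c -> Span xi D f -> Span xi D (fun v => c v * D v ^ j + f v).

Lemma Span_ext xi D f g : Span xi D f -> (forall v, f v = g v) -> Span xi D g.
Proof. intros H E. replace g with f; [exact H | apply functional_extensionality; auto]. Qed.

Lemma Span_coef xi D c : coef xi c -> Span xi D c.
Proof. intros Hc. eapply Span_ext; [apply (SpC _ _ c 0 _ Hc (Sp0 _ _)) | intros; simpl; ring]. Qed.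

Lemma Span_add xi D f g : Span xi D f -> Span xi D g -> Span xi D (fun v => f v + g v).
Proof.
  intros Hf Hg. induction Hf as [|c j f Hc Hf IH].
  - eapply Span_ext; [exact Hg | intros; cbv beta; ring].
  - eapply Span_ext; [apply (SpC _ _ c j _ Hc IH) | intros; cbv beta; ring].
Qed.

Lemma Span_mul xi D f g : Span xi D f -> Span xi D g -> Span xi D (fun v => f v * g v).
Proof.
  assert (Hmon : forall c j g, coef xi c -> Span xi D g ->
                 Span xi D (fun v => c v * D v ^ j * g v)).
  { intros c j g' Hc Hg. induction Hg as [|c' l g' Hc' Hg IH].
    - eapply Span_ext; [apply Sp0 | intros; cbv beta; ring].
    - eapply Span_ext; [apply (SpC _ _ _ (j + l) _ (coef_mul _ _ _ Hc Hc') IH)|].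
      intros v. cbv beta. rewrite pow_add. ring. }
  intros Hf Hg. induction Hf as [|c j f Hc Hf IH].
  - eapply Span_ext; [apply Sp0 | intros; cbv beta; ring].
  - eapply Span_ext; [apply (Span_add _ _ _ _ (Hmon c j _ Hc Hg) IH) | intros; cbv beta; ring].
Qed.

Lemma Span_exp xi D f k : Span xi D f -> Span xi D (fun v => (f v ^+ k)%R).
Proof.
  intros Hf. induction k as [|k IH].
  - eapply Span_ext; [apply (Span_coef _ _ _ (coef_const xi 1)) | intros; exact: GRing.rmorph1].
  - eapply Span_ext; [apply (Span_mul _ _ _ _ Hf IH) | intros; by rewrite GRing.exprS].
Qed.

Lemma Span_prod xi D (I : Type) (r : seq I) (P : pred I) (F : I -> pt -> R) :
  (forall i, Span xi D (F i)) -> Span xi D (fun v => (\prod_(i <- r | P i) F i v)%R).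
Proof.
  intros H. induction r as [|i r IH].
  - eapply Span_ext; [apply (Span_coef _ _ _ (coef_const xi 1))|].
    intros; rewrite big_nil; exact: GRing.rmorph1.
  - destruct (P i) eqn:E.
    + eapply Span_ext; [apply (Span_mul _ _ _ _ (H i) IH) | intros; by rewrite big_cons E].
    + eapply Span_ext; [apply IH | intros; by rewrite big_cons E].
Qed.

Lemma Span_qeval xi D (s : rat) w :
  coef xi w -> (forall v, v xi = ratr s * D v + w v) ->
  forall p, Span xi D (qeval p).
Proof.
  intros Hw Hx.
  assert (Hvar : forall i, Span xi D (fun v => v i)).
  { intros i. destruct (i == xi) eqn:E.
    - move/eqP: E => ->.
      eapply Span_ext; [apply (SpC _ _ _ 1 _ (coef_const xi s) (Span_coef _ _ _ Hw))|].
      intros v. cbv beta. rewrite Hx. ring.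
    - apply Span_coef, coef_var. by rewrite E. }
  intros p. induction p as [|c m p _ _ IHp] using mpolyind.
  - eapply Span_ext; [apply Sp0 | intros v; by rewrite qeval0].
  - eapply Span_ext.
    { apply Span_add; [|exact IHp].
      apply Span_mul; [apply Span_coef, coef_const|].
      apply (Span_prod _ _ _ (index_enum _) (fun _ => true) (fun i v => (v i ^+ m i)%R)).
      intros i. apply Span_exp, Hvar. }
    intros v. rewrite qevalD /qeval map_mpolyZ mevalZ map_mpolyX mevalX. reflexivity.
Qed.

Definition Bv (m : nat) (v : pt) : R := basis m (Xc v) (Yc v) (Zc v).

Lemma Ffun_exp Q v : Ffun Q v =
  qeval (Q (@Ordinal 8 0 isT)) v * Bv 0 v + qeval (Q (@Ordinal 8 1 isT)) v * Bv 1 v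
  + qeval (Q (@Ordinal 8 2 isT)) v * Bv 2 v + qeval (Q (@Ordinal 8 3 isT)) v * Bv 3 v
  + qeval (Q (@Ordinal 8 4 isT)) v * Bv 4 v + qeval (Q (@Ordinal 8 5 isT)) v * Bv 5 v
  + qeval (Q (@Ordinal 8 6 isT)) v * Bv 6 v + qeval (Q (@Ordinal 8 7 isT)) v * Bv 7 v.
Proof. reflexivity. Qed.

Definition Fprim (xi : 'I_6) (f : pt -> R) : Prop :=
  exists Q : 'I_8 -> {mpoly rat[6]},
    Q (@Ordinal 8 0 isT) = 0%R /\ pderiv_on_U xi (Ffun Q) f.

Lemma Fprim_ext xi f g : Fprim xi f -> (forall v, inU v -> f v = g v) -> Fprim xi g.
Proof.
  intros [Q [H0 HQ]] E. exists Q; split; auto.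
  intros v Hv. eapply is_derive_eq; [apply HQ | apply E]; auto.
Qed.

Lemma Fprim_zero xi : Fprim xi (fun _ => 0).
Proof.
  exists (fun _ => 0%R). split; auto.
  intros v Hv. apply (is_derive_ext (fun _ => 0)); [|auto_derive; reflexivity].
  intros t. toR. rewrite Ffun_exp !qeval0. ring.
Qed.

Lemma Fprim_add xi f g : Fprim xi f -> Fprim xi g -> Fprim xi (fun v => f v + g v).
Proof.
  intros [Q [H0 HQ]] [Q' [H0' HQ']]. exists (fun k => Q k + Q' k)%R. split.
  - rewrite H0 H0'. exact: GRing.addr0.
  - intros v Hv. eapply is_derive_ext;
      [|apply (is_derive_plus (fun t => Ffun Q (upd v xi t)) (fun t => Ffun Q' (upd v xi t)));
        auto].
    intros t. rsimp. toR. rewrite !Ffun_exp !qevalD. ring.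
Qed.

Lemma Fprim_scal xi c f : coef xi c -> Fprim xi f -> Fprim xi (fun v => c v * f v).
Proof.
  intros [[p Hp] Cc] [Q [H0 HQ]].
  exists (fun k => p * Q k)%R. split.
  - rewrite H0. exact: GRing.mulr0.
  - intros v Hv. eapply is_derive_ext;
      [|apply (is_derive_scal (fun t => Ffun Q (upd v xi t)) (v xi) (c v)); auto].
    intros t. toR. rewrite !Ffun_exp !qevalM -!Hp !Cc. ring.
Qed.

Lemma Fprim_Span xi D B : (forall n, Fprim xi (fun v => D v ^ n * B v)) ->
  forall f, Span xi D f -> Fprim xi (fun v => f v * B v).
Proof.
  intros HB f Hf. induction Hf as [|c j f Hc Hf IH].
  - eapply Fprim_ext; [apply Fprim_zero | intros; cbv beta; ring].
  - eapply Fprim_ext; [apply (Fprim_add _ _ _ (Fprim_scal _ _ _ Hc (HB j)) IH)|].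
    intros; cbv beta; ring.
Qed.

Lemma finite_choice {T : Type} (x0 : T) (P : nat -> T -> Prop) n :
  (forall m, exists x, P m x) -> exists f : nat -> T, forall m, (m < n)%coq_nat -> P m (f m).
Proof.
  intros HP. induction n as [|n [f Hf]].
  - exists (fun _ => x0). intros m Hm. lia.
  - destruct (HP n) as [x Hx]. exists (fun m => if Nat.eqb m n then x else f m).
    intros m Hm. destruct (Nat.eqb_spec m n) as [->|Hne]; [exact Hx | apply Hf; lia].
Qed.

Definition basis_perm (pi : nat -> nat) : Prop :=
  pi 0%nat = 0%nat /\ forall f : nat -> R, sum8 (fun m => f (pi m)) = sum8 f.

Lemma Ffun_of_Phi (s : rat) (D E G : pt -> R) (pi : nat -> nat) h :
  polyfn D -> polyfn E -> polyfn G -> (forall m, Pol3 (h m)) ->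
  (forall a b c, h 0%nat a b c = 0) -> basis_perm pi ->
  (forall m v, Bv m v = basis (pi m) (D v) (E v) (G v)) ->
  exists Q : 'I_8 -> {mpoly rat[6]}, Q (@Ordinal 8 0 isT) = 0%R /\
    forall v, Ffun Q v = ratr s * Phi h (D v) (E v) (G v).
Proof.
  intros PD PE PG Ph Hh0 [Hpi0 Hperm] HB.
  have [q Hq] : exists q : nat -> {mpoly rat[6]}, forall m, (m < 8)%coq_nat ->
      forall v, qeval (q m) v = ratr s * h (pi m) (D v) (E v) (G v).
  { apply (finite_choice (0%R : {mpoly rat[6]})
      (fun m p => forall v, qeval p v = ratr s * h (pi m) (D v) (E v) (G v))).
    intros m.
    have [p Hp] : polyfn (fun v => ratr s * h (pi m) (D v) (E v) (G v))
      by apply polyfn_mul; [apply polyfn_const | apply polyfn_pol3].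
    exists p. intros v. by rewrite Hp. }
  set (q' := fun m => if Nat.eqb m 0 then 0%R else q m).
  exists (fun o : 'I_8 => q' o). split; [reflexivity|]. intros v.
  have Hterm : forall m, (m < 8)%coq_nat -> qeval (q' m) v * Bv m v
      = ratr s * (h (pi m) (D v) (E v) (G v) * basis (pi m) (D v) (E v) (G v)).
  { intros m Hm. rewrite HB /q'. destruct (Nat.eqb_spec m 0) as [->|Hne].
    - by rewrite qeval0 Hpi0 Hh0; ring.
    - rewrite Hq //. ring. }
  change (Ffun (fun o : 'I_8 => q' o) v) with (sum8 (fun m => qeval (q' m) v * Bv m v)).
  unfold Phi. rewrite -(Hperm (fun j => h j (D v) (E v) (G v) * basis j (D v) (E v) (G v))).
  unfold sum8. rewrite !Hterm; try lia. ring.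
Qed.

(* The coordinate moves the difference
   D = s (xi - partner) (s = +-1) and leaves the two other differences E, G
   fixed; the basis of F is the three-variable basis at (D,E,G), up to pi. *)
Section Axis.
Variables (xi partner : 'I_6) (s : rat) (D E G : pt -> R) (pi : nat -> nat).
Hypothesis Hs : ratr s * ratr s = 1.
Hypothesis Hpartner : partner != xi.
Hypothesis HD : forall v, D v = ratr s * (v xi - v partner).
Hypothesis HE : coef xi E.
Hypothesis HG : coef xi G.
Hypothesis HU : forall v, inU v -> D v <> 0 /\ E v <> 0 /\ G v <> 0.
Hypothesis Hpi : basis_perm pi.
Hypothesis HB : forall m v, Bv m v = basis (pi m) (D v) (E v) (G v).

Lemma polyfn_axis : polyfn D.
Proof.
  have [p Hp] : polyfn (fun v => ratr s * (v xi - v partner)).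
  { apply polyfn_mul; [apply polyfn_const|].
    apply polyfn_add; [|apply polyfn_opp]; apply polyfn_var. }
  exists p. intros v. by rewrite HD Hp.
Qed.

Lemma D_upd v t : D (upd v xi t) = D v + ratr s * (t - v xi).
Proof.
  rewrite !HD /upd eqxx (negbTE Hpartner). ring.
Qed.

(* D^n * Bv k has an F-primitive: transport [prim3_basis] by the chain rule,
   using s * s = 1. *)
Lemma Fprim_axis_monomial n k : Fprim xi (fun v => D v ^ n * Bv k v).
Proof.
  have [h [Ph [Hh0 Hh]]] := prim3_basis n (pi k).
  have [Q [HQ0 HQ]] := Ffun_of_Phi s _ _ _ pi h polyfn_axis (proj1 HE) (proj1 HG) Ph Hh0 Hpi HB.
  exists Q. split; [exact HQ0|]. intros v Hv. have [HD0 [HE0 HG0]] := HU v Hv.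
  apply (is_derive_ext (fun t => ratr s * Phi h (D v + ratr s * (t - v xi)) (E v) (G v))).
  { intros t. by rewrite HQ D_upd (proj2 HE) (proj2 HG). }
  eapply is_derive_eq.
  { apply is_derive_scal.
    apply (is_derive_comp (fun x => Phi h x (E v) (G v)) (fun t => D v + ratr s * (t - v xi))).
    - replace (D v + ratr s * (v xi - v xi)) with (D v) by ring. apply Hh; auto.
    - auto_derive; auto. }
  rsimp. toR. rewrite HB.
  transitivity ((ratr s * ratr s) * (D v ^ n * basis (pi k) (D v) (E v) (G v))); [ring|].
  rewrite Hs. ring.
Qed.

(* Every F_P has an F-primitive in xi: expand the coefficients of F_P as
   polynomials in D and integrate term by term. *)
Lemma Fprim_axis P : Fprim xi (Ffun P).
Proof.
  have Hw : coef xi (fun v => v partner) by apply coef_var.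
  have Hx : forall v, v xi = ratr s * D v + v partner.
  { intros v. rewrite HD. transitivity (ratr s * ratr s * (v xi - v partner) + v partner).
    - rewrite Hs. ring.
    - ring. }
  have Hterm : forall k o, Fprim xi (fun v => qeval (P o) v * Bv k v).
  { intros k o. apply (Fprim_Span xi D); [intros j; apply Fprim_axis_monomial|].
    exact (Span_qeval xi D s _ Hw Hx (P o)). }
  eapply Fprim_ext; [|intros v _; symmetry; apply Ffun_exp].
  repeat apply Fprim_add; apply Hterm.
Qed.

End Axis.

(* Exchanging X and Y, resp. X and Z, permutes the basis functions. *)
Definition swap_ab (m : nat) : nat :=
  match m with 2 => 3 | 3 => 2 | 6 => 7 | 7 => 6 | _ => m end%nat.
Definition swap_ac (m : nat) : nat :=
  match m with 2 => 4 | 4 => 2 | 5 => 7 | 7 => 5 | _ => m end%nat.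

Lemma basis_perm_id : basis_perm (fun m => m).
Proof. split; reflexivity. Qed.
Lemma basis_perm_ab : basis_perm swap_ab.
Proof. split; [reflexivity | intros f; unfold sum8; simpl; ring]. Qed.
Lemma basis_perm_ac : basis_perm swap_ac.
Proof. split; [reflexivity | intros f; unfold sum8; simpl; ring]. Qed.

Lemma basis_swap_ab m a b c : basis m a b c = basis (swap_ab m) b a c.
Proof.
  have Hr : r3 b a c = r3 a b c by unfold r3; f_equal; ring.
  destruct m as [|[|[|[|[|[|[|[|m]]]]]]]]; unfold basis, swap_ab; cbv zeta; rewrite ?Hr;
    try reflexivity; f_equal; unfold Rdiv; ring.
Qed.

Lemma basis_swap_ac m a b c : basis m a b c = basis (swap_ac m) c b a.
Proof.
  have Hr : r3 c b a = r3 a b c by unfold r3; f_equal; ring.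
  destruct m as [|[|[|[|[|[|[|[|m]]]]]]]]; unfold basis, swap_ac; cbv zeta; rewrite ?Hr;
    try reflexivity; f_equal; unfold Rdiv; ring.
Qed.

Lemma coef_diff xi i j : i != xi -> j != xi -> coef xi (fun v => v i - v j).
Proof.
  intros Hi Hj. split.
  - apply polyfn_add; [|apply polyfn_opp]; apply polyfn_var.
  - intros v t. by rewrite /upd (negbTE Hi) (negbTE Hj).
Qed.

Lemma ratr1 : ratr 1%R = 1 :> R.
Proof. exact: GRing.rmorph1. Qed.
Lemma ratrN1 : ratr (-1)%R = -1 :> R.
Proof. rewrite GRing.rmorphN. exact: (f_equal Ropp ratr1). Qed.

Ltac axis_side :=
  first
  [ by rewrite ?ratr1 ?ratrN1; ring
  | by []
  | intros ?; rewrite ?ratr1 ?ratrN1; unfold Xc, Yc, Zc; ring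
  | by apply coef_diff
  | intros ? (? & ? & ?); tauto
  | exact basis_perm_id | exact basis_perm_ab | exact basis_perm_ac
  | intros ? ?; reflexivity | intros ? ?; apply basis_swap_ab | intros ? ?; apply basis_swap_ac ].

Lemma Fprim_Ffun xi P : Fprim xi (Ffun P).
Proof.
  destruct xi as [[|[|[|[|[|[|i]]]]]] Hi]; [| | | | | | discriminate Hi].
  - have -> : Ordinal Hi = ix1 by apply: val_inj.
    apply (Fprim_axis ix1 iy1 1%R Xc Yc Zc (fun m => m)); axis_side.
  - have -> : Ordinal Hi = ix2 by apply: val_inj.
    apply (Fprim_axis ix2 iy2 1%R Yc Xc Zc swap_ab); axis_side.
  - have -> : Ordinal Hi = ix3 by apply: val_inj.
    apply (Fprim_axis ix3 iy3 1%R Zc Yc Xc swap_ac); axis_side.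
  - have -> : Ordinal Hi = iy1 by apply: val_inj.
    apply (Fprim_axis iy1 ix1 (-1)%R Xc Yc Zc (fun m => m)); axis_side.
  - have -> : Ordinal Hi = iy2 by apply: val_inj.
    apply (Fprim_axis iy2 ix2 (-1)%R Yc Xc Zc swap_ab); axis_side.
  - have -> : Ordinal Hi = iy3 by apply: val_inj.
    apply (Fprim_axis iy3 ix3 (-1)%R Zc Yc Xc swap_ac); axis_side.
Qed.

Definition mono (lam mu : 'I_3 -> nat) : {mpoly rat[6]} :=
  ('X_ix1 ^+ lam (@Ordinal 3 0 isT) * 'X_ix2 ^+ lam (@Ordinal 3 1 isT)
  * 'X_ix3 ^+ lam (@Ordinal 3 2 isT)
  * 'X_iy1 ^+ mu (@Ordinal 3 0 isT) * 'X_iy2 ^+ mu (@Ordinal 3 1 isT)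
  * 'X_iy3 ^+ mu (@Ordinal 3 2 isT))%R.

Lemma monomR_Ffun lam mu :
  monomR lam mu = Ffun (fun o : 'I_8 => if nat_of_ord o == 0%N then mono lam mu else 0%R).
Proof.
  apply functional_extensionality; intros v.
  rewrite Ffun_exp /= !qeval0 /mono !qevalM !qevalXn !qevalX.
  unfold monomR, Bv, basis. cbv zeta. change (Rc v) with (r3 (Xc v) (Yc v) (Zc v)).
  unfold Rdiv. ring.
Qed.

Theorem mainTheorem5 :
  (forall (P : 'I_8 -> {mpoly rat[6]}) (xi : 'I_6),
     exists Q : 'I_8 -> {mpoly rat[6]},
       Q (@Ordinal 8 0 isT) = 0%R /\ pderiv_on_U xi (Ffun Q) (Ffun P))
  /\
  (forall lam mu : 'I_3 -> nat,
     exists (Q : 'I_8 -> {mpoly rat[6]}) (G1 G2 G3 G4 G5 : pt -> R),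
       Q (@Ordinal 8 0 isT) = 0%R /\
       pderiv_on_U iy1 G1 (monomR lam mu) /\
       pderiv_on_U iy2 G2 G1 /\
       pderiv_on_U iy3 G3 G2 /\
       pderiv_on_U ix1 G4 G3 /\
       pderiv_on_U ix2 G5 G4 /\
       pderiv_on_U ix3 (Ffun Q) G5).
Proof.
  split; [intros P xi; exact (Fprim_Ffun xi P)|].
  intros lam mu. rewrite monomR_Ffun.
  have [Q1 [_ H1]] :=
    Fprim_Ffun iy1 (fun o : 'I_8 => if nat_of_ord o == 0%N then mono lam mu else 0%R).
  have [Q2 [_ H2]] := Fprim_Ffun iy2 Q1.
  have [Q3 [_ H3]] := Fprim_Ffun iy3 Q2.
  have [Q4 [_ H4]] := Fprim_Ffun ix1 Q3.
  have [Q5 [_ H5]] := Fprim_Ffun ix2 Q4.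
  have [Q6 [HQ6 H6]] := Fprim_Ffun ix3 Q5.
  exists Q6, (Ffun Q1), (Ffun Q2), (Ffun Q3), (Ffun Q4), (Ffun Q5).
  exact (conj HQ6 (conj H1 (conj H2 (conj H3 (conj H4 (conj H5 H6)))))).
Qed.
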